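(* Let $U$ be a linear subspace of $L_2(\mathcal{X},\mathcal{Y},\mu)$ that is closed under $\mathcal{Q}$, i.e. $\mathcal{Q}U\subset U$. Define $S=\{f\in U: f \text{ is } \mathcal{G}\text{-equivariant}\}$ and $A=\{f\in U:\mathcal{Q}f=0\}$. Then $U$ admits the orthogonal decomposition $U=S\oplus A$, orthogonality being with respect to $\langle\cdot,\cdot\rangle_\mu$.
   Context: $\mathcal{G}$ is a compact, second countable, Hausdorff topological group with its Borel $\sigma$-algebra and Haar probability measure $\lambda$ ($\lambda(\mathcal{G})=1$). $\mathcal{X}$ is a nonempty Polish space with its Borel $\sigma$-algebra, on which $\mathcal{G}$ acts measurably, $(g,x)\mapsto gx$. $\mathcal{Y}=\mathbb{R}^k$ with an inner product $\langle\cdot,\cdot\rangle$ and induced norm $\|\cdot\|$, on which $\mathcal{G}$ acts by a measurable linear representation $\psi$ that is unitary: $\langle\psi(g)a,\psi(g)b\rangle=\langle a,b\rangle$ for all $a,b,g$; write $gy=\psi(g)y$. $\mu$ is a $\mathcal{G}$-invariant Borel probability measure on $\mathcal{X}$ (if $X\sim\mu$ then $gX\sim\mu$ for all $g$). $L_2(\mathcal{X},\mathcal{Y},\mu)$ is the Hilbert space of $\mu$-a.e. equivalence classes of measurable $f:\mathcal{X}\to\mathcal{Y}$ with $\|f\|_\mu^2=\int\|f(x)\|^2d\mu(x)<\infty$, inner product $\langle f,h\rangle_\mu=\int_\mathcal{X}\langle f(x),h(x)\rangle d\mu(x)$. A function $f$ is $\mathcal{G}$-equivariant if $f(gx)=\psi(g)f(x)$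 for all $g\in\mathcal{G},x\in\mathcal{X}$. The averaging operator is $\mathcal{Q}f(x)=\int_\mathcal{G}\psi(g^{-1})f(gx)\,d\lambda(g)$. *)

From HB Require Import structures.
From mathcomp Require Import all_boot all_order all_algebra.
From mathcomp Require Import all_classical all_reals all_analysis.
Set Implicit Arguments. Unset Strict Implicit. Unset Printing Implicit Defensive.
Import Order.TTheory GRing.Theory Num.Theory.
Import numFieldNormedType.Exports.
Local Open Scope classical_set_scope.
Local Open Scope ring_scope.

Definition borel (T : ptopologicalType) := g_sigma_algebraType (@open T).

Definition topological_group (T : topologicalType)
    (mul : T -> T -> T) (inv : T -> T) (one : T) : Prop :=
  [/\ (forall a b c, mul a (mul b c) = mul (mul a b) c),
      (forall a, mul one a = a /\ mul a one = a),
      (forall a, mul (inv a) a = one /\ mul a (inv a) = one),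
      continuous (fun p : T * T => mul p.1 p.2)
    & continuous inv].

Definition polish_space (R : realType) (X : topologicalType) : Prop :=
  (exists D : set X, countable D /\ closure D = setT) /\
  exists d : X -> X -> R,
    [/\ (forall x y, d x y = 0 <-> x = y),
        (forall x y, d x y = d y x),
        (forall x y z, d x z <= d x y + d y z),
        (forall A : set X, open A <->
           (forall x, A x -> exists2 e : R, 0 < e & [set y | d x y < e] `<=` A))
      & (forall u : nat -> X,
           (forall e : R, 0 < e -> exists N, forall m n, (N <= m)%N -> (N <= n)%N ->
              d (u m) (u n) < e) ->
           exists l, (fun n => d (u n) l : R) @ \oo --> (0 : R))].

(* Haar probability measure on the compact group: a probability measure on the
   Borel sets which is invariant under left and right translations and under
   inversion (the latter two are automatic for Haar measure on a compact group). *)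
Definition haar_probability (R : realType) (G : ptopologicalType)
    (mul : G -> G -> G) (inv : G -> G) (lam : probability (borel G) R) : Prop :=
  forall A : set (borel G), measurable A ->
    [/\ (forall g : G, lam ((fun h : borel G => mul g h) @^-1` A) = lam A),
        (forall g : G, lam ((fun h : borel G => mul h g) @^-1` A) = lam A)
      & lam ((fun h : borel G => inv h) @^-1` A) = lam A].

Definition inner_product (R : realType) (k : nat)
    (ip : 'cV[R]_k -> 'cV[R]_k -> R) : Prop :=
  [/\ (forall a b, ip a b = ip b a),
      (forall (c : R) a b d, ip (c *: a + b) d = c * ip a d + ip b d)
    & (forall a, a != 0 -> 0 < ip a a)].

Section L2.
Context {d : measure_display} {X : measurableType d} {R : realType} {k : nat}.

(* measurable function X -> R^k (Borel on R^k = componentwise measurability) *)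
Definition vmeasurable (f : X -> 'cV[R]_k) : Prop :=
  forall i : 'I_k, measurable_fun setT (fun x => f x i ord0).

(* f is (a representative of an element) in L_2(X, R^k, mu) *)
Definition inL2 (mu : {measure set X -> \bar R}) (ip : 'cV[R]_k -> 'cV[R]_k -> R)
    (f : X -> 'cV[R]_k) : Prop :=
  vmeasurable f /\ mu.-integrable setT (fun x => (ip (f x) (f x))%:E).

Definition L2inner (mu : {measure set X -> \bar R}) (ip : 'cV[R]_k -> 'cV[R]_k -> R)
    (f h : X -> 'cV[R]_k) : \bar R :=
  (\int[mu]_x (ip (f x) (h x))%:E)%E.

(* U is (the set of all representatives of) a linear subspace of L_2(X,R^k,mu) *)
Definition L2_subspace (mu : {measure set X -> \bar R}) (ip : 'cV[R]_k -> 'cV[R]_k -> R)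
    (U : set (X -> 'cV[R]_k)) : Prop :=
  [/\ (forall f, U f -> inL2 mu ip f),
      (forall f h, U f -> vmeasurable h -> {ae mu, forall x, h x = f x} -> U h),
      U (fun _ => 0),
      (forall f h, U f -> U h -> U (fun x => f x + h x))
    & (forall (c : R) f, U f -> U (fun x => c *: f x))].
End L2.

Definition Qop (R : realType) (k : nat) (G : ptopologicalType) {dX} {X : measurableType dX}
    (inv : G -> G) (act : G -> X -> X) (psi : G -> 'M[R]_k)
    (lam : probability (borel G) R) (f : X -> 'cV[R]_k) : X -> 'cV[R]_k :=
  fun x => \col_(i < k)
    Rintegral lam setT (fun g : borel G => (psi (inv g) *m f (act g x)) i ord0).

Definition equivariant (R : realType) (k : nat) (G X : Type)
    (act : G -> X -> X) (psi : G -> 'M[R]_k) (f : X -> 'cV[R]_k) : Prop :=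
  forall g x, f (act g x) = psi g *m f x.

From HB Require Import structures.
From mathcomp Require Import all_boot all_order all_algebra.
From mathcomp Require Import all_classical all_reals all_analysis.
From mathcomp Require Import ring lra measurable_realfun.
Set Implicit Arguments. Unset Strict Implicit. Unset Printing Implicit Defensive.
Import Order.TTheory GRing.Theory Num.Theory.
Local Open Scope classical_set_scope.
Local Open Scope ring_scope.

(* Write f^g(x) := psi(g^-1) f(g x), so that Q f (x) is the Haar average of g |-> f^g(x).
   Right invariance of lam makes Q f equivariant at every x whose orbit energy
   \int_G |f(g x)|^2 dlam(g) is finite, and this holds mu-a.e. because, by Tonelli and
   the invariance of mu, the orbit energy integrates to ||f||^2.  Equivariant functions
   are fixed by Q, so f = Q f + (f - Q f) with Q (f - Q f) = 0 a.e.  For orthogonality,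
   if s is equivariant then unitarity and the invariance of mu give
   \int_X <s(x), f^g(x)> dmu = <s, f> for every g, and Fubini turns the average over g
   into <s, a> = \int_X <s(x), Q a (x)> dmu, which vanishes when Q a = 0. *)

Section InnerProduct.
Variables (R : realType) (k : nat) (ip : 'cV[R]_k -> 'cV[R]_k -> R).
Hypothesis ip_inner : inner_product ip.

Lemma ipC a b : ip a b = ip b a.
Proof. by case: ip_inner. Qed.

Lemma ip0l b : ip 0 b = 0.
Proof.
case: ip_inner => _ ipZDl _; have := ipZDl 1 0 0 b.
by rewrite scale1r addr0 mul1r; lra.
Qed.

Lemma ipDl a c b : ip (a + c) b = ip a b + ip c b.
Proof. by case: ip_inner => _ ipZDl _; rewrite -[a]scale1r ipZDl mul1r scale1r. Qed.

Lemma ipZl (r : R) a b : ip (r *: a) b = r * ip a b.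
Proof. by case: ip_inner => _ ipZDl _; rewrite -[r *: a]addr0 ipZDl ip0l addr0. Qed.

Lemma ipNl a b : ip (- a) b = - ip a b.
Proof. by rewrite -scaleN1r ipZl mulN1r. Qed.

Lemma ipDr a b c : ip a (b + c) = ip a b + ip a c.
Proof. by rewrite ipC ipDl ![ip _ a]ipC. Qed.

Lemma ipNr a b : ip a (- b) = - ip a b.
Proof. by rewrite ipC ipNl ipC. Qed.

Lemma ip_suml (I : Type) (r : seq I) (P : pred I) (F : I -> 'cV[R]_k) b :
  ip (\sum_(i <- r | P i) F i) b = \sum_(i <- r | P i) ip (F i) b.
Proof. by elim/big_rec2: _ => [|i y1 y2 _ <-]; rewrite ?ip0l ?ipDl. Qed.

Lemma ip_ge0 a : 0 <= ip a a.
Proof.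
have [->|a0] := eqVneq a 0; first by rewrite ip0l.
by case: ip_inner => _ _ /(_ a a0)/ltW.
Qed.

Lemma ip_eq0 a : ip a a = 0 -> a = 0.
Proof.
move=> aa0; apply/eqP; apply: contraT => a0.
by case: ip_inner => _ _ /(_ a a0); rewrite aa0 ltxx.
Qed.

Lemma normr_ip_le a b : `|ip a b| <= ip a a + ip b b.
Proof.
have := ip_ge0 (a + b); have := ip_ge0 (a - b).
rewrite !ipDl !ipDr !ipNl !ipNr (ipC b a).
have := ip_ge0 a; have := ip_ge0 b.
by have [|] := lerP 0 (ip a b); [move/ger0_norm->|move/ltr0_norm->]; lra.
Qed.

Definition gram : 'M[R]_k := \matrix_(i, j) ip (delta_mx i 0) (delta_mx j 0).

Lemma ip_expandl a b : ip a b = \sum_i a i 0 * ip (delta_mx i 0) b.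
Proof.
rewrite {1}(matrix_sum_delta a) ip_suml.
by apply: eq_bigr => i _; rewrite big_ord1 ipZl.
Qed.

Lemma ip_gram a b : ip a b = (a^T *m gram *m b) 0 0.
Proof.
rewrite ip_expandl mxE; under [RHS]eq_bigr => j _ do rewrite mxE mulr_suml.
rewrite exchange_big; apply: eq_bigr => i _.
rewrite ipC ip_expandl mulr_sumr; apply: eq_bigr => j _.
by rewrite !mxE ipC; ring.
Qed.

Lemma gram_unit : gram \in unitmx.
Proof.
rewrite -row_free_unit; apply: inj_row_free => v vgram0.
have : ip v^T v^T = 0 by rewrite ip_gram trmxK vgram0 mul0mx mxE.
by move/ip_eq0/(congr1 trmx); rewrite trmxK trmx0.
Qed.

Lemma coord_bound : exists c : 'I_k -> R,
  forall (a : 'cV[R]_k) i, `|a i 0| <= ip a a + c i.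
Proof.
pose v i : 'cV_k := (delta_mx 0 i *m invmx gram)^T.
exists (fun i => ip (v i) (v i)) => a i.
have -> : a i 0 = ip (v i) a.
  by rewrite ip_gram trmxK -!mulmxA mulKmx ?gram_unit // -rowE mxE.
by rewrite addrC normr_ip_le.
Qed.

Lemma measurable_ip d (T : measurableType d) (D : set T) (f h : T -> 'cV[R]_k) :
  (forall i, measurable_fun D (fun x => f x i 0)) ->
  (forall i, measurable_fun D (fun x => h x i 0)) ->
  measurable_fun D (fun x => ip (f x) (h x)).
Proof.
move=> mf mh; under eq_fun do rewrite ip_gram mxE.
apply: measurable_sum => j; apply: measurable_funM => //.
under eq_fun do rewrite mxE; apply: measurable_sum => i.
by under eq_fun do rewrite mxE; apply: measurable_funM.
Qed.
End InnerProduct.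

Section L2Space.
Local Open Scope ereal_scope.
Variables (R : realType) (k : nat) (ip : 'cV[R]_k -> 'cV[R]_k -> R).
Hypothesis ip_inner : inner_product ip.
Variables (d : measure_display) (T : measurableType d).
Variable mu : {measure set T -> \bar R}.

Lemma measurable_ip_sq (f : T -> 'cV[R]_k) : vmeasurable f ->
  measurable_fun setT (fun x => (ip (f x) (f x))%:E).
Proof. by move=> mf; apply/measurable_EFinP; apply: measurable_ip. Qed.

Lemma inL2_lty f : inL2 mu ip f -> \int[mu]_x (ip (f x) (f x))%:E < +oo.
Proof.
case=> _ /integrableP[_]; apply: le_lt_trans; rewrite le_eqVlt; apply/orP; left.
by apply/eqP/eq_integral => x _; rewrite gee0_abs // lee_fin ip_ge0.
Qed.

Lemma L2inner_self_eq0 f : inL2 mu ip f -> L2inner mu ip f f = 0 ->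
  {ae mu, forall x, f x = 0%R}.
Proof.
move=> [mf _] ff0.
have : ae_eq mu setT (fun x => (ip (f x) (f x))%:E) (cst 0).
  apply/(ae_eq_integral_abs _ measurableT); first exact: measurable_ip_sq.
  by under eq_integral do rewrite gee0_abs ?lee_fin ?ip_ge0 //.
by apply: filterS => x /(_ I) [/(ip_eq0 ip_inner)].
Qed.

Lemma inL2_ae_eq (f h : T -> 'cV[R]_k) : inL2 mu ip f -> vmeasurable h ->
  {ae mu, forall x, f x = h x} -> inL2 mu ip h.
Proof.
move=> [mf /integrableP[_ ff_lty]] mh fh; split => //.
apply/integrableP; split; first exact: measurable_ip_sq.
rewrite (ae_eq_integral (fun x => `|(ip (f x) (f x))%:E|)) //.
- by apply: measurableT_comp => //; exact: measurable_ip_sq.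
- by apply: measurableT_comp => //; exact: measurable_ip_sq.
- by apply: filterS fh => x fhx _; rewrite fhx.
Qed.

Lemma L2inner_ae_eql (f h a : T -> 'cV[R]_k) : vmeasurable f -> vmeasurable h ->
  vmeasurable a -> {ae mu, forall x, f x = h x} -> L2inner mu ip f a = L2inner mu ip h a.
Proof.
move=> mf mh ma fh; apply: ae_eq_integral => //.
- by apply/measurable_EFinP; exact: measurable_ip.
- by apply/measurable_EFinP; exact: measurable_ip.
- by apply: filterS fh => x fhx _; rewrite fhx.
Qed.
End L2Space.

Section GroupLaws.
Variables (T : topologicalType) (mul : T -> T -> T) (inv : T -> T) (one : T).
Hypothesis HG : topological_group mul inv one.

Lemma group_inv_uniq a b : mul a b = one -> b = inv a.
Proof.
case: HG => mulA mul1 mulV _ _ ab1.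
by rewrite -(mul1 b).1 -(mulV a).1 -mulA ab1 (mul1 (inv a)).2.
Qed.

Lemma group_invM a b : inv (mul a b) = mul (inv b) (inv a).
Proof.
case: HG => mulA mul1 mulV _ _; apply/esym/group_inv_uniq.
by rewrite -mulA (mulA b) (mulV b).2 (mul1 _).1 (mulV a).2.
Qed.

Lemma group_invK a : inv (inv a) = a.
Proof. by apply/esym/group_inv_uniq; case: HG => _ _ /(_ a)[]. Qed.

Lemma continuous_mulr g : continuous (mul^~ g).
Proof.
case: HG => _ _ _ mul_cont _ x.
apply: (@continuous2_cvg _ _ _ _ _ _ id (cst g) mul x g).
- exact: (mul_cont (x, g)).
- exact: cvg_id.
- exact: cvg_cst.
Qed.
End GroupLaws.

Lemma continuous_borel_measurable (T U : ptopologicalType) (f : T -> U) :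
  continuous f -> measurable_fun setT (f : borel T -> borel U).
Proof.
move=> cf; apply: (@measurability _ _ (borel T) (borel U) setT f (@open U)) => //.
move=> _ [A oA <-]; apply: sub_sigma_algebra; rewrite setTI.
exact: (continuousP f).1.
Qed.

Section MeasurePreserving.
Local Open Scope ereal_scope.
Variables (R : realType) (d : measure_display) (T : measurableType d).
Variables (m : {measure set T -> \bar R}) (phi : T -> T).
Hypothesis mphi : measurable_fun setT phi.
Hypothesis phi_preserving : forall B, measurable B -> m (phi @^-1` B) = m B.

Lemma ge0_integral_measure_preserving (f : T -> \bar R) :
  measurable_fun setT f -> (forall x, 0 <= f x) ->
  \int[m]_x f (phi x) = \int[m]_x f x.
Proof.
move=> mf f0.
have := ge0_integral_pushforward mphi m measurableT mf (fun y _ => f0 y).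
rewrite preimage_setT => <-.
by apply: eq_measure_integral => A mA _ /=; rewrite /pushforward phi_preserving.
Qed.

Lemma integral_measure_preserving (f : T -> \bar R) :
  measurable_fun setT f -> \int[m]_x f (phi x) = \int[m]_x f x.
Proof.
move=> mf; rewrite [LHS]integralE [RHS]integralE.
rewrite -/((f \o phi)^\+) -/((f \o phi)^\-) funepos_comp funeneg_comp.
by rewrite !ge0_integral_measure_preserving //;
  [exact: measurable_funeneg|exact: measurable_funepos].
Qed.
End MeasurePreserving.

Section IntegralLincomb.
Local Open Scope ereal_scope.
Variables (R : realType) (d : measure_display) (T : measurableType d).
Variable m : {measure set T -> \bar R}.

Lemma integral_lincomb n (c : 'I_n -> R) (F : 'I_n -> T -> R) :
  (forall j, m.-integrable setT (EFin \o F j)) ->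
  \int[m]_t (\sum_j c j * F j t)%:E = (\sum_j c j * Rintegral m setT (F j))%:E.
Proof.
move=> iF; under eq_integral do rewrite -sumEFin.
rewrite integral_sum //; last first.
  by move=> j; under eq_fun do rewrite EFinM; apply: integrableZl => //; exact: iF.
rewrite -sumEFin; apply: eq_bigr => j _.
under eq_integral do rewrite EFinM.
rewrite integralZl //; last exact: iF.
by rewrite /Rintegral EFinM fineK //; apply: integrable_fin_num => //; exact: iF.
Qed.

Lemma Rintegral_lincomb n (c : 'I_n -> R) (F : 'I_n -> T -> R) :
  (forall j, m.-integrable setT (EFin \o F j)) ->
  (Rintegral m setT (fun t => \sum_j c j * F j t) =
   \sum_j c j * Rintegral m setT (F j))%R.
Proof. by move=> iF; rewrite {1}/Rintegral integral_lincomb. Qed.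
End IntegralLincomb.

Lemma integral_cst_probability d (T : measurableType d) (R : realType)
  (P : probability T R) (c : \bar R) : (\int[P]_(x in setT) c = c)%E.
Proof. by rewrite integral_cst //= probability_setT mule1. Qed.

Lemma measurable_fine_integral_fst d1 d2 (T1 : measurableType d1)
    (T2 : measurableType d2) (R : realType)
    (m1 : {sigma_finite_measure set T1 -> \bar R}) (F : T1 * T2 -> R) :
  measurable_fun setT F ->
  measurable_fun setT (fun y => fine (\int[m1]_x (F (x, y))%:E)).
Proof.
move=> mF; have mFE : measurable_fun setT (EFin \o F) by exact/measurable_EFinP.
have mpos := measurable_fun_fubini_tonelli_G (m1 := m1) _
  (measurable_funepos mFE) (fun p => funepos_ge0 _ p).
have mneg := measurable_fun_fubini_tonelli_G (m1 := m1) _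
  (measurable_funeneg mFE) (fun p => funeneg_ge0 _ p).
under eq_fun do rewrite integralE.
apply: measurableT_comp => //; apply: emeasurable_funB.
- by apply: eq_measurable_fun mpos => y _; apply: eq_integral => x _; rewrite !funeposE.
- by apply: eq_measurable_fun mneg => y _; apply: eq_integral => x _; rewrite !funenegE.
Qed.

Section Averaging.
Local Open Scope ereal_scope.
Variables (R : realType) (G : ptopologicalType).
Variables (mul : G -> G -> G) (inv : G -> G) (one : G).
Hypothesis HG : topological_group mul inv one.
Variable lam : probability (borel G) R.
Hypothesis Hlam : haar_probability mul inv lam.
Variables (X : ptopologicalType) (act : G -> X -> X).
Hypothesis Hact_meas :
  measurable_fun setT (fun p : (borel G * borel X)%type => (act p.1 p.2 : borel X)).
Hypothesis HactM : forall g h x, act (mul g h) x = act g (act h x).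
Variables (k : nat) (ip : 'cV[R]_k -> 'cV[R]_k -> R).
Hypothesis Hip : inner_product ip.
Variable psi : G -> 'M[R]_k.
Hypothesis Hpsi_meas : forall i j : 'I_k, measurable_fun setT (fun g : borel G => psi g i j).
Hypothesis Hpsi1 : psi one = 1%:M.
Hypothesis HpsiM : forall g h, psi (mul g h) = psi g *m psi h.
Hypothesis Hpsi_unit : forall g a b, ip (psi g *m a) (psi g *m b) = ip a b.
Variable mu : probability (borel X) R.
Hypothesis Hmu : forall g (B : set (borel X)), measurable B ->
  mu ((fun x : borel X => act g x) @^-1` B) = mu B.

Local Notation GB := (borel G).
Local Notation XB := (borel X).
Local Notation Q := (Qop (X := XB) inv act psi lam).

Lemma measurable_act g : measurable_fun setT (act g : XB -> XB).
Proof. exact: (measurable_fun_pair2 (T1 := GB) g Hact_meas). Qed.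

Lemma measurable_orbit x : measurable_fun setT (fun g : GB => (act g x : XB)).
Proof. exact: (measurable_fun_pair1 (T2 := XB) x Hact_meas). Qed.

Lemma measurable_psi_inv i j : measurable_fun setT (fun g : GB => psi (inv g) i j).
Proof.
apply: measurableT_comp (Hpsi_meas i j) _.
by apply: continuous_borel_measurable; case: HG.
Qed.

Lemma psi_invl g : psi (inv g) *m psi g = 1%:M.
Proof. by rewrite -HpsiM; case: HG => _ _ /(_ g) [-> _] _ _. Qed.

Lemma integral_act g (f : XB -> \bar R) : measurable_fun setT f ->
  \int[mu]_x f (act g x) = \int[mu]_x f x.
Proof. by apply: integral_measure_preserving; [exact: measurable_act|exact: Hmu]. Qed.

Lemma integral_mulr g (f : GB -> \bar R) : measurable_fun setT f ->
  \int[lam]_h f (mul h g) = \int[lam]_h f h.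
Proof.
apply: integral_measure_preserving.
  apply: continuous_borel_measurable; exact: (@continuous_mulr G mul inv one HG g).
by move=> B mB; have [_ + _] := Hlam mB; apply.
Qed.

Implicit Types f : XB -> 'cV[R]_k.

Definition twisted_orbit f (x : X) (g : G) : 'cV[R]_k := psi (inv g) *m f (act g x).

Definition orbit_energy f (x : XB) : \bar R :=
  \int[lam]_g (ip (f (act g x)) (f (act g x)))%:E.

Lemma QE f x i : Q f x i ord0 = Rintegral lam setT (fun g => twisted_orbit f x g i ord0).
Proof. by rewrite mxE. Qed.

Lemma measurable_twisted_orbit f i : vmeasurable f ->
  measurable_fun setT (fun p : GB * XB => twisted_orbit f p.2 p.1 i ord0).
Proof.
move=> mf; under eq_fun do rewrite mxE.
apply: measurable_sum => j; apply: measurable_funM.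
  exact: measurableT_comp (measurable_psi_inv i j) measurable_fst.
exact: measurableT_comp (mf j) Hact_meas.
Qed.

Lemma measurable_twisted_orbit_at f x i : vmeasurable f ->
  measurable_fun setT (fun g : GB => twisted_orbit f x g i ord0).
Proof.
by move=> mf; have := measurable_fun_pair1 (T1 := GB) (T2 := XB) x
  (measurable_twisted_orbit i mf).
Qed.

Lemma measurable_orbit_sq f : vmeasurable f ->
  measurable_fun setT (fun p : GB * XB => (ip (f (act p.1 p.2)) (f (act p.1 p.2)))%:E).
Proof.
by move=> mf; exact: measurableT_comp (measurable_ip_sq Hip mf) Hact_meas.
Qed.

Lemma orbit_energy_ge0 f x : 0 <= orbit_energy f x.
Proof. by apply: integral_ge0 => g _; rewrite lee_fin ip_ge0. Qed.

Lemma measurable_orbit_energy f : vmeasurable f -> measurable_fun setT (orbit_energy f).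
Proof.
move=> mf; apply: (measurable_fun_fubini_tonelli_G _ (measurable_orbit_sq mf)).
by move=> p; rewrite lee_fin ip_ge0.
Qed.

Lemma integral_orbit_energy f : vmeasurable f ->
  \int[mu]_x orbit_energy f x = \int[mu]_x (ip (f x) (f x))%:E.
Proof.
move=> mf; have := fubini_tonelli (m1 := lam) (m2 := mu) _ (measurable_orbit_sq mf).
move=> /(_ (fun p => ip_ge0 Hip _)) /= <-.
under eq_integral do rewrite (integral_act _ (measurable_ip_sq Hip mf)).
exact: integral_cst_probability.
Qed.

Lemma orbit_energy_lty_ae f : inL2 mu ip f -> {ae mu, forall x, orbit_energy f x < +oo}.
Proof.
move=> f_L2; have mf := f_L2.1.
have : mu.-integrable setT (orbit_energy f).
  apply/integrableP; split; first exact: measurable_orbit_energy.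
  under eq_integral do rewrite gee0_abs ?orbit_energy_ge0 //.
  by rewrite integral_orbit_energy //; exact: inL2_lty.
move=> /(integrable_ae measurableT); apply: filterS => x /(_ I).
by move=> /fin_numPlt /andP[].
Qed.

Lemma orbit_energy_act f g x : vmeasurable f -> orbit_energy f (act g x) = orbit_energy f x.
Proof.
move=> mf; rewrite /orbit_energy; under eq_integral do rewrite -HactM.
apply: (@integral_mulr g (fun h : GB => (ip (f (act h x)) (f (act h x)))%:E)).
exact: measurableT_comp (measurable_ip_sq Hip mf) (measurable_orbit x).
Qed.

Lemma integrable_twisted_orbit f x i : vmeasurable f -> orbit_energy f x < +oo ->
  lam.-integrable setT (EFin \o (fun g => twisted_orbit f x g i ord0)).
Proof.
move=> mf fin; have [c coord_le] := coord_bound Hip.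
apply: (@le_integrable _ _ _ _ _ measurableT _
  (fun g : GB => (ip (f (act g x)) (f (act g x)) + c i)%:E)) => //.
- by apply/measurable_EFinP; exact: measurable_twisted_orbit_at.
- move=> g _; rewrite /= lee_fin.
  by apply: le_trans (coord_le _ i) _; rewrite Hpsi_unit ler_norm.
under eq_fun do rewrite EFinD.
apply: integrableD => //; last exact: finite_measure_integrable_cst.
apply/integrableP; split.
  exact: measurableT_comp (measurable_ip_sq Hip mf) (measurable_orbit x).
by under eq_integral do rewrite gee0_abs ?lee_fin ?ip_ge0 //.
Qed.

Lemma Q_act f g x : vmeasurable f -> orbit_energy f x < +oo ->
  Q f (act g x) = psi g *m Q f x.
Proof.
move=> mf fin; apply/matrixP => i j; rewrite (ord1 j) QE mxE.
under eq_bigr do rewrite QE.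
rewrite -Rintegral_lincomb; last by move=> l; exact: integrable_twisted_orbit.
rewrite /Rintegral; congr fine.
(* substitute h := h' * g^-1, using the right invariance of lam *)
rewrite -(@integral_mulr (inv g) (fun h => (twisted_orbit f (act g x) h i ord0)%:E));
  last by apply/measurable_EFinP; exact: measurable_twisted_orbit_at.
apply: eq_integral => h _; congr EFin.
have [mulA mul1 mulV _ _] := HG.
rewrite /twisted_orbit (group_invM HG) (group_invK HG) HpsiM -mulmxA mxE.
rewrite -HactM -mulA (mulV g).1 (mul1 h).2.
by apply: eq_bigr => l _; rewrite mxE.
Qed.

Lemma Q_id_equivariant f x : equivariant act psi f -> Q f x = f x.
Proof.
move=> f_equi; apply/matrixP => i j; rewrite (ord1 j) QE.
under eq_Rintegral do rewrite /twisted_orbit f_equi mulmxA psi_invl mul1mx.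
by rewrite Rintegral_cst //= probability_setT mulr1.
Qed.

Lemma ae_orbit_null (N : set XB) : measurable N -> mu N = 0 ->
  {ae mu, forall x : XB, lam ((fun g : GB => act g x) @^-1` N) = 0}.
Proof.
move=> mN N0.
pose indN (p : GB * XB) := (\1_N (act p.1 p.2) : R)%:E.
have m_indN : measurable_fun setT indN.
  by apply/measurable_EFinP; apply: measurableT_comp Hact_meas; exact: measurable_indic.
have indN0 p : 0 <= indN p by rewrite lee_fin.
have int0 : \int[mu]_x \int[lam]_g indN (g, x) = 0.
  rewrite -(fubini_tonelli _ m_indN indN0) /indN /=.
  transitivity (\int[lam]_(g in setT) (0 : \bar R)); last exact: integral0.
  apply: eq_integral => g _.
  rewrite (@integral_act g (fun x => (\1_N x : R)%:E)); last first.
    by apply/measurable_EFinP; exact: measurable_indic.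
  by rewrite integral_indic // setIT.
have : ae_eq mu setT (fun x => \int[lam]_g indN (g, x)) (cst 0).
  apply/(ae_eq_integral_abs _ measurableT).
    exact: (measurable_fun_fubini_tonelli_G _ m_indN indN0).
  by under eq_integral do rewrite gee0_abs ?integral_ge0 //.
apply: filterS => x /(_ I) int_x0.
rewrite -(setIT (_ @^-1` N)) -integral_indic //.
by rewrite -[X in measurable X]setTI; exact: measurable_orbit.
Qed.

Lemma Q_ae_eq u v : vmeasurable u -> vmeasurable v ->
  {ae mu, forall x, u x = v x} -> {ae mu, forall x, Q u x = Q v x}.
Proof.
move=> m_u m_v [N [mN N0 uvN]].
apply: filterS (ae_orbit_null mN N0) => x orbitN0.
apply/matrixP => i j; rewrite (ord1 j) !QE /Rintegral; congr fine.
apply: ae_eq_integral => //.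
- by apply/measurable_EFinP; exact: measurable_twisted_orbit_at.
- by apply/measurable_EFinP; exact: measurable_twisted_orbit_at.
exists ((fun g : GB => act g x) @^-1` N); split => //.
  by rewrite -[X in measurable X]setTI; exact: measurable_orbit.
move=> g /= tw_neq; apply: uvN => /= uv; apply: tw_neq => _.
by rewrite /twisted_orbit uv.
Qed.

Lemma integral_ip_twisted_orbit f x b : vmeasurable f -> orbit_energy f x < +oo ->
  \int[lam]_g (ip b (twisted_orbit f x g))%:E = (ip b (Q f x))%:E.
Proof.
move=> mf fin; under eq_integral do rewrite (ipC Hip) (ip_expandl Hip).
under eq_integral do under eq_bigr do rewrite mulrC.
rewrite integral_lincomb; last by move=> i; exact: integrable_twisted_orbit.
rewrite (ipC Hip) (ip_expandl Hip); congr EFin.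
by apply: eq_bigr => i _; rewrite QE mulrC.
Qed.

Lemma integrable_ip_twisted_orbit s a : inL2 mu ip s -> inL2 mu ip a ->
  (lam \x mu).-integrable setT
    (fun p : GB * XB => (ip (s p.2) (twisted_orbit a p.2 p.1))%:E).
Proof.
move=> s_L2 a_L2; have ms := s_L2.1; have ma := a_L2.1.
pose F (p : GB * XB) := (ip (s p.2) (twisted_orbit a p.2 p.1))%:E.
have mF : measurable_fun setT F.
  apply/measurable_EFinP; apply: (measurable_ip Hip) => i;
    last exact: measurable_twisted_orbit.
  exact: measurableT_comp (ms i) measurable_snd.
have slice_le g : \int[mu]_x `|F (g, x)| <=
    \int[mu]_x (ip (s x) (s x))%:E + \int[mu]_x (ip (a x) (a x))%:E.
  have ma_g := measurableT_comp (measurable_ip_sq Hip ma) (measurable_act g).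
  rewrite -(integral_act g (measurable_ip_sq Hip ma)) -ge0_integralD //;
    [|by move=> x _; rewrite lee_fin ip_ge0|exact: measurable_ip_sq
     |by move=> x _; rewrite lee_fin ip_ge0].
  apply: ge0_le_integral => //.
  - by apply: measurableT_comp => //; exact: measurableT_comp mF (pair1_measurable g).
  - by apply: emeasurable_funD => //; exact: measurable_ip_sq.
  move=> x _; rewrite /F /= lee_fin.
  by apply: le_trans (normr_ip_le Hip _ _) _; rewrite Hpsi_unit.
apply/(@integrable12ltyP _ _ GB XB R lam mu _ mF).
apply: (@le_lt_trans _ _ (\int[lam]_(g in setT)
  (\int[mu]_x (ip (s x) (s x))%:E + \int[mu]_x (ip (a x) (a x))%:E))).
  apply: ge0_le_integral => //.
  - by move=> g _; exact: integral_ge0.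
  - apply: (@measurable_fun_fubini_tonelli_F _ _ GB XB R mu (abse \o F)).
      exact: measurableT_comp.
    by move=> p; exact: abse_ge0.
by rewrite integral_cst_probability lte_add_pinfty //; exact: inL2_lty.
Qed.

Lemma L2inner_equivariant_Q0 s a : inL2 mu ip s -> equivariant act psi s ->
  inL2 mu ip a -> {ae mu, forall x, Q a x = 0%R} -> L2inner mu ip s a = 0.
Proof.
move=> s_L2 s_equi a_L2 Qa0.
have Fint := integrable_ip_twisted_orbit s_L2 a_L2.
have slice g : \int[mu]_x (ip (s x) (twisted_orbit a x g))%:E = L2inner mu ip s a.
  have msa : measurable_fun setT (fun x : XB => (ip (s x) (a x))%:E).
    by apply/measurable_EFinP; apply: (measurable_ip Hip); [exact: s_L2.1|exact: a_L2.1].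
  rewrite /L2inner -(@integral_act g _ msa).
  apply: eq_integral => x _; rewrite s_equi.
  by rewrite /twisted_orbit -(Hpsi_unit (inv g) (psi g *m s x)) mulmxA psi_invl mul1mx.
have fubini : \int[lam]_g \int[mu]_x (ip (s x) (twisted_orbit a x g))%:E =
    \int[mu]_x \int[lam]_g (ip (s x) (twisted_orbit a x g))%:E := Fubini Fint.
transitivity (\int[lam]_g \int[mu]_x (ip (s x) (twisted_orbit a x g))%:E).
  rewrite -[LHS](@integral_cst_probability _ _ _ lam).
  by apply: eq_integral => g _; rewrite slice.
have mfubini : measurable_fun setT
    (fun x : XB => \int[lam]_g (ip (s x) (twisted_orbit a x g))%:E) :=
  measurable_fubini_G Fint.
rewrite fubini -[RHS](integral0 mu setT).
apply: ae_eq_integral; [exact: measurableT|exact: mfubini|exact: measurable_cst|].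
apply: filterS2 Qa0 (orbit_energy_lty_ae a_L2) => x Qax fin _.
by rewrite (integral_ip_twisted_orbit (s x) a_L2.1 fin) Qax (ipC Hip) ip0l.
Qed.

(* Q f is only known to be equivariant where the orbit energy of f is finite. *)
Definition equivariant_part f (x : XB) : 'cV[R]_k :=
  if orbit_energy f x < +oo then Q f x else 0%R.

Lemma equivariant_part_equivariant f : vmeasurable f ->
  equivariant act psi (equivariant_part f).
Proof.
move=> mf g x; rewrite /equivariant_part orbit_energy_act //.
by case: ifP => fin; [exact: Q_act|rewrite mulmx0].
Qed.

Lemma measurable_equivariant_part f : vmeasurable f -> vmeasurable (equivariant_part f).
Proof.
move=> mf i; pose E := [set x : XB | orbit_energy f x < +oo].
have mE : measurable E.
  rewrite -[X in measurable X]setTI.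
  by apply: emeasurable_fun_infty_o => //; exact: measurable_orbit_energy.
have -> : (fun x => equivariant_part f x i ord0) =
    (fun x => fine (\int[lam]_g (twisted_orbit f x g i ord0)%:E) * \1_E x)%R.
  apply/funext => x; rewrite /equivariant_part indicE.
  case: ifP => fin; first by rewrite QE mem_set // mulr1.
  by rewrite memNset ?mxE ?mulr0 // /E /= fin.
apply: measurable_funM; last exact: measurable_indic.
exact: (@measurable_fine_integral_fst _ _ GB XB R lam _ (measurable_twisted_orbit i mf)).
Qed.

Lemma ae_eq_equivariant_part f h : inL2 mu ip f ->
  {ae mu, forall x, h x = Q f x} -> {ae mu, forall x, h x = equivariant_part f x}.
Proof.
move=> f_L2 hQ; apply: filterS2 hQ (orbit_energy_lty_ae f_L2) => x -> fin.
by rewrite /equivariant_part fin.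
Qed.

Lemma QB f h x : vmeasurable f -> vmeasurable h ->
  orbit_energy f x < +oo -> orbit_energy h x < +oo ->
  Q (fun y => f y - h y)%R x = (Q f x - Q h x)%R.
Proof.
move=> mf mh finf finh; apply/matrixP => i j; rewrite (ord1 j) !mxE.
under eq_Rintegral do rewrite mulmxBr mxE [X in (_ + X)%R]mxE.
by rewrite RintegralB //; exact: integrable_twisted_orbit.
Qed.

Lemma ae_Q_sub_eq0 f h : inL2 mu ip f -> inL2 mu ip h ->
  {ae mu, forall x, h x = Q f x} -> {ae mu, forall x, Q (fun y => f y - h y)%R x = 0%R}.
Proof.
move=> f_L2 h_L2 hQ; have mf := f_L2.1; have mh := h_L2.1.
have Qh := Q_ae_eq mh (measurable_equivariant_part mf) (ae_eq_equivariant_part f_L2 hQ).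
near=> x.
have finf : orbit_energy f x < +oo by near: x; exact: orbit_energy_lty_ae.
have finh : orbit_energy h x < +oo by near: x; exact: orbit_energy_lty_ae.
rewrite QB // (near Qh x) // (Q_id_equivariant x (equivariant_part_equivariant mf)).
by rewrite /equivariant_part finf subrr.
Unshelve. all: by end_near.
Qed.

Lemma equivariant_decomposition f h : inL2 mu ip f -> inL2 mu ip h ->
  {ae mu, forall x, h x = Q f x} ->
  (exists2 s : XB -> 'cV[R]_k, vmeasurable s /\ equivariant act psi s &
     {ae mu, forall x, h x = s x}) /\
  {ae mu, forall x, Q (fun y => f y - h y)%R x = 0%R}.
Proof.
move=> f_L2 h_L2 hQ; split; last exact: ae_Q_sub_eq0.
exists (equivariant_part f); last exact: ae_eq_equivariant_part.
by split; [exact: measurable_equivariant_part f_L2.1|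
           exact: equivariant_part_equivariant f_L2.1].
Qed.
End Averaging.

Theorem lemma3p1 (R : realType)
  (* the group G *)
  (G : ptopologicalType) (mul : G -> G -> G) (inv : G -> G) (one : G)
  (HG : topological_group mul inv one)
  (HGc : compact [set: G]) (HGsc : @second_countable G) (HGh : @hausdorff_space G)
  (lam : probability (borel G) R) (Hlam : haar_probability mul inv lam)
  (* the space X *)
  (X : ptopologicalType) (HX : polish_space R X)
  (act : G -> X -> X)
  (Hact_meas : measurable_fun setT (fun p : (borel G * borel X)%type => (act p.1 p.2 : borel X)))
  (Hact1 : forall x, act one x = x)
  (HactM : forall g h x, act (mul g h) x = act g (act h x))
  (* Y = R^k with an inner product, unitary measurable representation psi *)
  (k : nat) (ip : 'cV[R]_k -> 'cV[R]_k -> R) (Hip : inner_product ip)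
  (psi : G -> 'M[R]_k)
  (Hpsi_meas : forall i j : 'I_k, measurable_fun setT (fun g : borel G => psi g i j))
  (Hpsi1 : psi one = 1%:M)
  (HpsiM : forall g h, psi (mul g h) = psi g *m psi h)
  (Hpsi_unit : forall g a b, ip (psi g *m a) (psi g *m b) = ip a b)
  (* G-invariant probability measure mu on X *)
  (mu : probability (borel X) R)
  (Hmu : forall g (B : set (borel X)), measurable B ->
           mu ((fun x : borel X => act g x) @^-1` B) = mu B)
  (* the subspace U, closed under Q *)
  (U : set (borel X -> 'cV[R]_k)) (HU : L2_subspace mu ip U)
  (HQU : forall f, U f -> exists2 h, U h &
           {ae mu, forall x, h x = Qop (X:=borel X) inv act psi lam f x}) :
  let S := [set f | U f /\ exists2 f' : borel X -> 'cV[R]_k,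
              vmeasurable f' /\ equivariant act psi f' &
              {ae mu, forall x, f x = f' x}] in
  let A := [set f | U f /\ {ae mu, forall x, Qop (X:=borel X) inv act psi lam f x = 0}] in
  [/\ (forall s a, S s -> A a -> L2inner mu ip s a = 0%E),
      (forall f, S f -> A f -> {ae mu, forall x, f x = 0})
    & (forall f, U f -> exists s a, [/\ S s, A a &
         {ae mu, forall x, f x = s x + a x}])].
Proof.
move=> S A; have [U_L2 _ _ UD UZ] := HU.
have orth s a : S s -> A a -> L2inner mu ip s a = 0%E.
  move=> [Us [s' [ms' s'_equi] ss']] [Ua Qa0].
  rewrite (L2inner_ae_eql Hip (U_L2 _ Us).1 ms' (U_L2 _ Ua).1 ss').
  have s'_L2 := inL2_ae_eq Hip (U_L2 _ Us) ms' ss'.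
  exact: (L2inner_equivariant_Q0 HG Hact_meas Hip Hpsi_meas Hpsi1 HpsiM Hpsi_unit Hmu
    s'_L2 s'_equi (U_L2 _ Ua) Qa0).
split => // [f Sf Af|f Uf].
  by have := L2inner_self_eq0 Hip (U_L2 _ (proj1 Sf)) (orth f f Sf Af).
have [h Uh hQ] := HQU f Uf.
have [hS Q0] := equivariant_decomposition HG Hlam Hact_meas HactM Hip Hpsi_meas Hpsi1
  HpsiM Hpsi_unit Hmu (U_L2 _ Uf) (U_L2 _ Uh) hQ.
exists h, (fun x => f x - h x); split => //.
- split => //; rewrite (_ : (fun x => f x - h x) = fun x => f x + (-1) *: h x).
    exact: UD _ _ Uf (UZ _ _ Uh).
  by apply/funext => x; rewrite scaleN1r.
- by apply: aeW => x; rewrite addrC subrK.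
Qed.
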